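(* Consider U-PB$(\hat x_0,\chi,\lambda_0,\bar\varepsilon,\overline N)$ described in the context, and let $i$ be the first iteration of a cycle with prox stepsize $\lambda$. Then: (a) if $\lambda\le(1-\chi)/(2L_f)$, then $t_i\le\frac{4\lambda M_f^2}{1-\chi}$; (b) if $\|x-y\|\le D$ for all $x,y\in\mathrm{dom}\, h$ (for some finite $D$), then $t_i\le\frac{\lambda(16M_f^2+L_f^2D^2)}{4(1-\chi)}$.
   Context: Setting: $f,h:\mathbb{R}^n\to\mathbb{R}\cup\{+\infty\}$ proper lsc convex, $\mathrm{dom}\, h\subseteq\mathrm{dom}\, f$, $\phi=f+h$, $\phi_*=\inf\phi$ attained. Subgradient oracle $f'(x)\in\partial f(x)$ on $\mathrm{dom}\, h$ with $\|f'(x)-f'(y)\|\le2M_f+L_f\|x-y\|$ for $x,y\in\mathrm{dom}\, h$, $M_f,L_f\ge0$. $\ell_f(u;x):=f(x)+\langle f'(x),u-x\rangle$. ''Convex function'' means proper lsc convex on $\mathbb{R}^n$. In (a), if $L_f=0$ the condition on $\lambda$ is vacuous. BU$(x^c,x,m_f,\lambda)$: given $\lambda>0$, convex $m_f\le f$ with $x=\mathrm{argmin}_u\{m_f(u)+h(u)+\frac1{2\lambda}\|u-x^c\|^2\}$, outputs any convex $m_f^+$ with $\max\{\overline m_f,\ell_f(\cdot;x)\}\le m_f^+\le f$, where $\overline m_f\le f$, $\overline m_f(x)=m_f(x)$ and $x=\mathrm{argmin}_u\{\overline m_f(u)+h(u)+\frac1{2\lambda}\|u-x^c\|^2\}$.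 U-PB$(\hat x_0,\chi,\lambda_0,\bar\varepsilon,\overline N)$, inputs in $\mathrm{dom}\, h\times[0,1)\times\mathbb{R}_{++}\times\mathbb{R}_{++}\times\{1,2,\ldots\}$: Step 0: $\lambda=\lambda_0$, $N=0$, $j=1$, $k=1$; choose convex $f_1$ with $\ell_f(\cdot;\hat x_0)\le f_1\le f$. Step 1: $x_j=\mathrm{argmin}_u\{(f_j+h)(u)+\frac1{2\lambda}\|u-\hat x_{k-1}\|^2\}$; if $\phi(x_j)-\phi_*\le\bar\varepsilon$ stop. Step 2: $\bar\phi_j=\phi(x_j)+\frac\chi{2\lambda}\|x_j-\hat x_{k-1}\|^2$ if $N=0$, else $\bar\phi_j=\min\{\bar\phi_{j-1},\phi(x_j)+\frac\chi{2\lambda}\|x_j-\hat x_{k-1}\|^2\}$; $N=N+1$; $t_j=\bar\phi_j-[(f_j+h)(x_j)+\frac1{2\lambda}\|x_j-\hat x_{k-1}\|^2]$. Step 3: if $t_j>(1-\chi)\bar\varepsilon/2$ and $N<\overline N$: null update $f_{j+1}=\mathrm{BU}(\hat x_{k-1},x_j,f_j,\lambda)$. Otherwise: if $t_j>(1-\chi)\bar\varepsilon/2$ and $N=\overline N$, reset update $\lambda\leftarrow\lambda/2$; else serious update $\hat x_k=x_j$, $\lambda_k=\lambda$, $k\leftarrow k+1$; then set $N=0$ and choose convex $f_{j+1}$ with $\ell_f(\cdot;\hat x_{k-1})\le f_{j+1}\le f$. Step 4: $j\leftarrow j+1$, go to Step 1. A cycle is a reset or serious iteration together with all consecutive null iterations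 immediately preceding it; its iterations share the same prox stepsize $\lambda$ and prox-center $\hat x_{k-1}$, and its first iteration is the one at which $N=0$ when entering Step 2. *)

From HB Require Import structures.
From mathcomp Require Import all_boot all_order all_algebra.
From mathcomp Require Import all_classical all_reals all_analysis.
Set Implicit Arguments. Unset Strict Implicit. Unset Printing Implicit Defensive.
Import Order.TTheory GRing.Theory Num.Theory.
Import numFieldNormedType.Exports.
Local Open Scope ring_scope.

Section Defs.
Context {R : realType} {n : nat}.
Local Notation E := 'rV[R]_n.

Definition dotp (u v : E) : R := \sum_(i < n) u ord0 i * v ord0 i.
Definition enorm (u : E) : R := Num.sqrt (dotp u u).

Local Open Scope ereal_scope.

Definition edom (f : E -> \bar R) : set E := [set x | f x < +oo].

(* proper, convex, lower semicontinuous on R^n ("convex function" in the paper) *)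
Definition proper_fun (f : E -> \bar R) : Prop :=
  (forall x, f x != -oo) /\ (exists x, f x < +oo).
Definition convex_fun (f : E -> \bar R) : Prop :=
  forall (x y : E) (t : R), (0 < t < 1)%R ->
    f (t *: x + (1 - t) *: y)%R <= t%:E * f x + (1 - t)%:E * f y.
Definition cvx (f : E -> \bar R) : Prop :=
  [/\ proper_fun f, convex_fun f & lower_semicontinuous f].

Definition is_subgrad (f : E -> \bar R) (x g : E) : Prop :=
  f x \is a fin_num /\ forall u, f x + (dotp g (u - x)%R)%:E <= f u.

Definition lin (f : E -> \bar R) (fp : E -> E) (x u : E) : \bar R :=
  f x + (dotp (fp x) (u - x)%R)%:E.

Definition is_argmin (F : E -> \bar R) (x : E) : Prop := forall u, F x <= F u.

Definition proxobj (m h : E -> \bar R) (lam : R) (xc u : E) : \bar R :=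
  m u + h u + ((2 * lam)^-1 * enorm (u - xc) ^+ 2)%R%:E.

(* output specification of BU(xc, x, m, lam) : mp is an admissible output *)
Definition BU_out (f h : E -> \bar R) (fp : E -> E)
    (xc x : E) (m : E -> \bar R) (lam : R) (mp : E -> \bar R) : Prop :=
  exists mbar : E -> \bar R,
    [/\ forall u, mbar u <= f u, mbar x = m x,
        is_argmin (proxobj mbar h lam xc) x,
        cvx mp &
        forall u, maxe (mbar u) (lin f fp x u) <= mp u /\ mp u <= f u].

Definition fresh_model (f : E -> \bar R) (fp : E -> E) (xc : E)
    (m : E -> \bar R) : Prop :=
  cvx m /\ forall u, lin f fp xc u <= m u /\ m u <= f u.

(* A run of U-PB(x0, chi, lam0, eps, Nbar) through iterations 1..J (1-based),
   none of which stopped at Step 1.  For iteration j: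
     lam j   : prox stepsize used at iteration j,
     N j     : value of the counter N when entering Step 1 (= entering Step 2),
     xc j    : prox-center \hat x_{k-1} of iteration j,
     fm j    : model f_j,
     x j     : x_j computed in Step 1,
     phib j  : \bar\phi_j computed in Step 2,
     t j     : t_j computed in Step 2. *)
Definition UPB_run (f h : E -> \bar R) (fp : E -> E) (phistar : R)
    (x0 : E) (chi lam0 eps : R) (Nbar : nat)
    (J : nat) (lam : nat -> R) (N : nat -> nat) (xc : nat -> E)
    (fm : nat -> E -> \bar R) (x : nat -> E) (phib t : nat -> \bar R) : Prop :=
  let phi := fun u => f u + h u in
  let thr := ((1 - chi) * eps / 2)%R in
  [/\ (* Step 0 *)
      [/\ lam 1%N = lam0, N 1%N = 0%N, xc 1%N = x0 & fresh_model f fp x0 (fm 1%N)],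
      (* Steps 1 and 2 for iterations 1..J *)
      (forall j, (1 <= j <= J)%N ->
        [/\ is_argmin (proxobj (fm j) h (lam j) (xc j)) (x j),
            ~ (phi (x j) - phistar%:E <= eps%:E),
            phib j = (if N j == 0%N then
                        phi (x j) + ((chi / (2 * lam j)) * enorm (x j - xc j) ^+ 2)%:E
                      else
                        mine (phib j.-1)
                          (phi (x j) + ((chi / (2 * lam j)) * enorm (x j - xc j) ^+ 2)%:E))
          & t j = phib j - (fm j (x j) + h (x j)
                           + ((2 * lam j)^-1 * enorm (x j - xc j) ^+ 2)%:E)]) &
      (* Step 3 (and Step 4): transition from iteration j to j+1, for j < J *)
      (forall j, (1 <= j < J)%N ->
        let N' := (N j).+1 in
        if (thr%:E < t j) && (N' < Nbar)%N then
          (* null update *)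
          [/\ lam j.+1 = lam j, N j.+1 = N', xc j.+1 = xc j &
              BU_out f h fp (xc j) (x j) (fm j) (lam j) (fm j.+1)]
        else if (thr%:E < t j) && (N' == Nbar) then
          (* reset update *)
          [/\ lam j.+1 = (lam j / 2)%R, N j.+1 = 0%N, xc j.+1 = xc j &
              fresh_model f fp (xc j.+1) (fm j.+1)]
        else
          (* serious update: \hat x_k = x_j becomes the new prox-center *)
          [/\ lam j.+1 = lam j, N j.+1 = 0%N, xc j.+1 = x j &
              fresh_model f fp (xc j.+1) (fm j.+1)])].

End Defs.

(* At the first iteration i of a cycle the model f_i lies above the linearization
   of f at the prox-center x^c and \bar\phi_i is not a running minimum, so with
   r = |x_i - x^c|
     t_i = f(x_i) - f_i(x_i) - (1 - chi)/(2 lam) r^2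
        <= f(x_i) - l_f(x_i; x^c) - (1 - chi)/(2 lam) r^2.
   Cutting the segment [x^c, x_i] into k pieces and applying the subgradient
   inequality at the right end of each piece bounds f(x_i) - l_f(x_i; x^c) by
   2 M_f r + L_f r^2 (k + 1)/(2 k), hence by 2 M_f r + L_f r^2 / 2.  What remains is
   the maximum of a concave quadratic in r; in (b) one first uses r^2 <= D r.
   The oracle bound only holds on dom h, which contains every prox-center and
   iterate because every model is finite and dominated by f. *)

From HB Require Import structures.
From mathcomp Require Import all_boot all_order all_algebra.
From mathcomp Require Import all_classical all_reals all_analysis.
From mathcomp Require Import ring lra.
Import Order.TTheory GRing.Theory Num.Theory.
Import numFieldNormedType.Exports.
Set Implicit Arguments. Unset Strict Implicit. Unset Printing Implicit Defensive.
Local Open Scope ring_scope.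

Section InnerProduct.
Variables (R : realType) (n : nat).
Implicit Types (u v w : 'rV[R]_n) (c : R).

Lemma dotpC u v : dotp u v = dotp v u.
Proof. by apply: eq_bigr => j _; rewrite mulrC. Qed.

Lemma dotpZl c u v : dotp (c *: u) v = c * dotp u v.
Proof. by rewrite /dotp mulr_sumr; apply: eq_bigr => j _; rewrite mxE mulrA. Qed.

Lemma dotpZr c u v : dotp u (c *: v) = c * dotp u v.
Proof. by rewrite dotpC dotpZl dotpC. Qed.

Lemma dotpBl u v w : dotp (u - v) w = dotp u w - dotp v w.
Proof. by rewrite /dotp -sumrB; apply: eq_bigr => j _; rewrite !mxE mulrBl. Qed.

Lemma dotpBr u v w : dotp u (v - w) = dotp u v - dotp u w.
Proof. by rewrite dotpC dotpBl !(dotpC u). Qed.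

Lemma dotpp_ge0 u : 0 <= dotp u u.
Proof. by apply: sumr_ge0 => j _; rewrite -expr2 sqr_ge0. Qed.

Lemma dotpp_eq0 u : dotp u u = 0 -> u = 0.
Proof.
move=> uu0; apply/rowP => j; rewrite mxE; apply/eqP; rewrite -sqrf_eq0 expr2.
by apply/eqP; apply: (psumr_eq0P _ uu0) => // k _; rewrite -expr2 sqr_ge0.
Qed.

Lemma enorm_ge0 u : 0 <= enorm u.
Proof. exact: sqrtr_ge0. Qed.

Lemma enorm_sqr u : enorm u ^+ 2 = dotp u u.
Proof. by rewrite sqr_sqrtr // dotpp_ge0. Qed.

Lemma enormZ c u : 0 <= c -> enorm (c *: u) = c * enorm u.
Proof.
move=> c_ge0; rewrite /enorm dotpZl dotpZr mulrA -expr2 sqrtrM ?sqr_ge0 //.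
by rewrite sqrtr_sqr ger0_norm.
Qed.

Lemma enorm_eq0_dotp u v : enorm u = 0 -> dotp u v = 0.
Proof.
move=> u0; have -> : u = 0 by apply: dotpp_eq0; rewrite -enorm_sqr u0 expr0n.
by rewrite -(scale0r (0 : 'rV[R]_n)) dotpZl mul0r.
Qed.

Lemma dotp_le_enormM u v : dotp u v <= enorm u * enorm v.
Proof.
have [u0|u_neq0] := eqVneq (enorm u) 0; first by rewrite enorm_eq0_dotp // u0 mul0r.
have [v0|v_neq0] := eqVneq (enorm v) 0.
  by rewrite dotpC enorm_eq0_dotp // v0 mulr0.
have uv_gt0 : 0 < enorm u * enorm v by rewrite mulr_gt0 // lt0r ?u_neq0 ?v_neq0 enorm_ge0.
have := dotpp_ge0 (enorm v *: u - enorm u *: v).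
rewrite dotpBl !dotpBr !dotpZl !dotpZr (dotpC v u) -!enorm_sqr.
nra.
Qed.

End InnerProduct.

Lemma le_of_le_addr_divn (R : realType) (X Y Z : R) :
  (forall k : nat, (0 < k)%N -> X <= Y + Z / k%:R) -> X <= Y.
Proof.
move=> le_XYZ; apply/ler_addgt0Pr => e e_gt0.
pose k := Num.Def.archi_bound (`|Z| / e).
have k_gt0 : 0 < k%:R :> R.
  by apply: le_lt_trans (archi_boundP _); rewrite divr_ge0 // ltW.
apply: (le_trans (le_XYZ k _)); first by rewrite -(ltr0n R).
rewrite lerD2l ler_pdivrMr // (le_trans (ler_norm Z)) // -ler_pdivrMl //.
by rewrite mulrC ltW // archi_boundP // divr_ge0 // ltW.
Qed.

Lemma increment_le_affine_integral (R : realType) (phi : R -> R) (a b : R) :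
  (forall s s', 0 <= s' -> s' <= s -> s <= 1 ->
     phi s - phi s' <= (s - s') * (a + b * s)) ->
  phi 1 - phi 0 <= a + b / 2.
Proof.
move=> incr; apply: (@le_of_le_addr_divn _ _ _ (b / 2)) => k k_gt0.
have kR_gt0 : 0 < k%:R :> R by rewrite ltr0n.
have partial m : (m <= k)%N -> phi (m%:R / k%:R) - phi 0
    <= m%:R / k%:R * a + b * (m%:R * (m%:R + 1)) / (2 * k%:R ^+ 2).
  elim: m => [|m IHm] mk; first by rewrite mulr0n mul0r subrr; lra.
  have /IHm {}IHm := ltnW mk.
  have le_mSm : m%:R / k%:R <= m.+1%:R / k%:R :> R by rewrite ler_pM2r ?invr_gt0 // ler_nat.
  have le_Sm1 : m.+1%:R / k%:R <= 1 :> R by rewrite ler_pdivrMr // mul1r ler_nat.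
  have step := incr _ _ (divr_ge0 (ler0n _ _) (ltW kR_gt0)) le_mSm le_Sm1.
  have E : m.+1%:R / k%:R * a + b * (m.+1%:R * (m.+1%:R + 1)) / (2 * k%:R ^+ 2)
      = (m.+1%:R / k%:R - m%:R / k%:R) * (a + b * (m.+1%:R / k%:R))
        + (m%:R / k%:R * a + b * (m%:R * (m%:R + 1)) / (2 * k%:R ^+ 2)).
    by rewrite -natr1; field; rewrite gt_eqF.
  rewrite E; lra.
have := partial k (leqnn k); rewrite divff ?gt_eqF //.
suff -> : 1 * a + b * (k%:R * (k%:R + 1)) / (2 * k%:R ^+ 2) = a + b / 2 + b / 2 / k%:R by [].
by field; rewrite gt_eqF.
Qed.

Section SubgradientGap.
Variables (R : realType) (n : nat).
Variables (f : 'rV[R]_n -> \bar R) (fp : 'rV[R]_n -> 'rV[R]_n) (M L : R) (xc x : 'rV[R]_n).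
Local Notation seg s := (s *: x + (1 - s) *: xc).
Hypothesis seg_subgrad : forall s, 0 <= s <= 1 -> is_subgrad f (seg s) (fp (seg s)).
Hypothesis seg_subgrad_growth : forall s, 0 <= s <= 1 ->
  enorm (fp (seg s) - fp xc) <= 2 * M + L * enorm (seg s - xc).

Lemma subgrad_lin_gap_le :
  fine (f x) - fine (f xc) - dotp (fp xc) (x - xc)
    <= 2 * M * enorm (x - xc) + L / 2 * enorm (x - xc) ^+ 2.
Proof.
set d := x - xc; set r := enorm d.
have segB s s' : seg s' - seg s = (s' - s) *: d by apply/rowP => j; rewrite !mxE; ring.
have segBc s : seg s - xc = s *: d by apply/rowP => j; rewrite !mxE; ring.
pose phi s := fine (f (seg s)) - s * dotp (fp xc) d.
suff : phi 1 - phi 0 <= 2 * M * r + L * r ^+ 2 / 2.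
  have seg0 : seg 0 = xc by rewrite scale0r add0r subr0 scale1r.
  have seg1 : seg 1 = x by rewrite scale1r subrr scale0r addr0.
  by rewrite /phi /= seg0 seg1; lra.
apply: increment_le_affine_integral => s s' s'_ge0 le_s's s_le1.
have s01 : 0 <= s <= 1 by rewrite s_le1 (le_trans s'_ge0).
have s'01 : 0 <= s' <= 1 by rewrite s'_ge0 (le_trans le_s's).
have [fs_fin subgrad_s] := seg_subgrad s01.
have := subgrad_s (seg s').
rewrite -(fineK fs_fin) -(fineK (seg_subgrad s'01).1) -EFinD lee_fin segB dotpZr.
have growth : dotp (fp (seg s) - fp xc) d <= (2 * M + L * (s * r)) * r.
  apply: le_trans (dotp_le_enormM _ _) _; apply: ler_wpM2r; first exact: enorm_ge0.
  by rewrite -enormZ -?segBc; [exact: seg_subgrad_growth | case/andP: s01].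
rewrite dotpBl in growth.
have ss'_ge0 : 0 <= s - s' by rewrite subr_ge0.
have := ler_wpM2l ss'_ge0 growth.
rewrite /phi; lra.
Qed.

End SubgradientGap.

Local Open Scope ereal_scope.

Section ExtendedValued.
Variables (R : realType) (n : nat).
Local Notation E := 'rV[R]_n.

Definition lin_sandwich (f : E -> \bar R) (fp : E -> E) (z : E) (m : E -> \bar R) :=
  forall u, lin f fp z u <= m u /\ m u <= f u.

Lemma edom_fin_num (h : E -> \bar R) u : proper_fun h -> edom h u -> h u \is a fin_num.
Proof. by case=> /(_ u) hu _; rewrite /edom /= ltey fin_numE hu. Qed.

Lemma edom_segment (h : E -> \bar R) (x y : E) (s : R) :
  cvx h -> edom h x -> edom h y -> (0 <= s <= 1)%R ->
  edom h (s *: x + (1 - s) *: y)%R.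
Proof.
move=> [h_proper h_convex _] hx hy /andP[s_ge0 s_le1].
have [->|s_neq0] := eqVneq s 0%R; first by rewrite scale0r add0r subr0 scale1r.
have [->|s_neq1] := eqVneq s 1%R; first by rewrite scale1r subrr scale0r addr0.
have s01 : (0 < s < 1)%R by rewrite !lt_neqAle eq_sym s_neq0 s_neq1 s_ge0 s_le1.
rewrite /edom /=; apply: le_lt_trans (h_convex x y s s01) _.
rewrite -(fineK (edom_fin_num h_proper hx)) -(fineK (edom_fin_num h_proper hy)).
by rewrite -!EFinM -EFinD ltry.
Qed.

Lemma lin_sandwich_fin_num f fp z m u :
  lin_sandwich f fp z m -> is_subgrad f z (fp z) -> f u \is a fin_num ->
  m u \is a fin_num.
Proof.
move=> /(_ u)[lo hi] [fz_fin _] /fin_numPlt/andP[_ fu_lt].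
apply/fin_numPlt/andP; split; last exact: le_lt_trans hi fu_lt.
by apply: lt_le_trans lo; rewrite /lin -(fineK fz_fin) -EFinD ltNyr.
Qed.

Lemma prox_argmin_edom f h fp m (lam : R) xc z xs xp (c : R) :
  is_subgrad f z (fp z) -> lin_sandwich f fp z m -> f xs + h xs = c%:E ->
  is_argmin (proxobj m h lam xc) xp -> edom h xp.
Proof.
move=> [fz_fin _] m_sand fhxs xp_min.
have mxp_neqNy : m xp != -oo.
  rewrite -ltNye; apply: lt_le_trans (m_sand xp).1.
  by rewrite /lin -(fineK fz_fin) -EFinD ltNyr.
have bound : proxobj m h lam xc xp <= c%:E + ((2 * lam)^-1 * enorm (xs - xc) ^+ 2)%:E.
  apply: le_trans (xp_min xs) _; rewrite /proxobj -fhxs.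
  by do 2 apply: leeD2r; exact: (m_sand xs).2.
rewrite /edom /= ltey; apply/eqP => hxp.
by move: bound; rewrite /proxobj hxp addey // addye // leye_eq.
Qed.

End ExtendedValued.

Section Run.
Variables (R : realType) (n : nat).
Local Notation E := 'rV[R]_n.
Variables (f h : E -> \bar R) (fp : E -> E) (phistar : R) (x0 : E) (chi lam0 eps : R)
  (Nbar J : nat) (lam : nat -> R) (N : nat -> nat) (xc : nat -> E)
  (fm : nat -> E -> \bar R) (x : nat -> E) (phib t : nat -> \bar R).
Hypotheses (h_cvx : cvx h) (f_subgrad : forall u, edom h u -> is_subgrad f u (fp u))
  (phistar_attained : exists xs, f xs + h xs = phistar%:E)
  (x0_dom : edom h x0) (lam0_gt0 : (0 < lam0)%R)
  (run : UPB_run f h fp phistar x0 chi lam0 eps Nbar J lam N xc fm x phib t).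

Lemma run_x_edom j z : (1 <= j <= J)%N -> edom h z -> lin_sandwich f fp z (fm j) ->
  edom h (x j).
Proof.
move=> jJ z_dom z_sand; have [xs fhxs] := phistar_attained.
have [_ steps _] := run; have [x_min _ _ _] := steps j jJ.
exact: prox_argmin_edom (f_subgrad z_dom) z_sand fhxs x_min.
Qed.

(* The model produced by a null step is only known to dominate the linearization
   at the last iterate, hence the existential base point [z]. *)
Lemma run_invariant j : (1 <= j <= J)%N ->
  [/\ (0 < lam j)%R, edom h (xc j) & exists2 z, edom h z & lin_sandwich f fp z (fm j)].
Proof.
have [[lam1 _ xc1 [_ fresh1]] _ trans] := run.
elim: j => [//|[_ _|j IHj /andP[_ jJ]]]; first by rewrite lam1 xc1; split => //; exists x0.
have jJ' : (1 <= j.+1 <= J)%N by rewrite /= ltnW.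
have [lam_gt0 xc_dom [z z_dom z_sand]] := IHj jJ'.
have x_dom := run_x_edom jJ' z_dom z_sand.
have := trans j.+1 jJ; rewrite /=.
case: ifP => _.
  case=> -> _ -> [mbar [_ _ _ _ mp_bounds]]; split => //; exists (x j.+1) => // u.
  have [lo hi] := mp_bounds u; split => //.
  by apply: le_trans lo; rewrite le_max lexx orbT.
case: ifP => _.
  by case=> -> _ -> [_ fresh]; split; [rewrite divr_gt0 | | exists (xc j.+1)].
by case=> -> _ -> [_ fresh]; split => //; exists (x j.+1).
Qed.

Lemma run_cycle_start_fresh i : (1 <= i <= J)%N -> N i = 0%N ->
  fresh_model f fp (xc i) (fm i).
Proof.
have [[_ _ xc1 fresh1] _ trans] := run.
case: i => [//|[_ _|i /andP[_ iJ] Ni]]; first by rewrite xc1.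
have := trans i.+1 iJ; rewrite /=.
case: ifP => _; first by case=> _; rewrite Ni.
by case: ifP => _; case.
Qed.

Lemma run_cycle_start_edom i : (1 <= i <= J)%N -> N i = 0%N ->
  edom h (xc i) /\ edom h (x i).
Proof.
move=> iJ Ni; have [_ xc_dom _] := run_invariant iJ.
have [_ sand] := run_cycle_start_fresh iJ Ni.
by split => //; exact: run_x_edom iJ xc_dom sand.
Qed.

Lemma run_t_cycle_start i : (1 <= i <= J)%N -> N i = 0%N ->
  t i = (fine (f (x i)) - fine (fm i (x i))
         - (1 - chi) / (2 * lam i) * enorm (x i - xc i) ^+ 2)%:E.
Proof.
move=> iJ Ni; have [xc_dom x_dom] := run_cycle_start_edom iJ Ni.
have [_ sand] := run_cycle_start_fresh iJ Ni.
have fx_fin := (f_subgrad x_dom).1.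
have hx_fin : h (x i) \is a fin_num by case: h_cvx => h_proper _ _; exact: edom_fin_num.
have mx_fin := lin_sandwich_fin_num sand (f_subgrad xc_dom) fx_fin.
have [_ steps _] := run; have [_ _ -> ->] := steps i iJ; rewrite Ni eqxx /=.
rewrite -[f (x i)](fineK fx_fin) -[h (x i)](fineK hx_fin) -[fm i (x i)](fineK mx_fin).
by rewrite -!EFinD; congr (_%:E); ring.
Qed.

Lemma run_cycle_start_gap (M L : R) i :
  (forall u v, edom h u -> edom h v ->
     (enorm (fp u - fp v) <= 2 * M + L * enorm (u - v))%R) ->
  (1 <= i <= J)%N -> N i = 0%N ->
  exists2 T : R, t i = T%:E &
    (T <= 2 * M * enorm (x i - xc i) + L / 2 * enorm (x i - xc i) ^+ 2
          - (1 - chi) / (2 * lam i) * enorm (x i - xc i) ^+ 2)%R.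
Proof.
move=> growth iJ Ni; have [xc_dom x_dom] := run_cycle_start_edom iJ Ni.
have [_ sand] := run_cycle_start_fresh iJ Ni.
rewrite run_t_cycle_start //; eexists; first reflexivity.
have seg_dom s : (0 <= s <= 1)%R -> edom h (s *: x i + (1 - s) *: xc i)%R.
  exact: edom_segment.
have gap := subgrad_lin_gap_le (fun s s01 => f_subgrad (seg_dom s s01))
  (fun s s01 => growth _ _ (seg_dom s s01) xc_dom).
have mx_fin := lin_sandwich_fin_num sand (f_subgrad xc_dom) (f_subgrad x_dom).1.
move: (sand (x i)).1.
rewrite /lin -[f (xc i)](fineK (f_subgrad xc_dom).1) -[fm i (x i)](fineK mx_fin).
rewrite -EFinD lee_fin; lra.
Qed.

End Run.

Local Close Scope ereal_scope.

Section QuadraticBounds.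
Variable R : realType.
Implicit Types (a c r M L lam p D T : R).

Lemma quadratic_le_max a c r : 0 < c -> a * r - c * r ^+ 2 <= a ^+ 2 / (4 * c).
Proof.
move=> c_gt0; rewrite ler_pdivlMr ?mulr_gt0 //.
have := sqr_ge0 (a - 2 * c * r); lra.
Qed.

Lemma gap_le_small_step M L lam p r T : 0 < lam -> 0 < p -> 0 <= L ->
  (L = 0 \/ lam <= p / (2 * L)) ->
  T <= 2 * M * r + L / 2 * r ^+ 2 - p / (2 * lam) * r ^+ 2 ->
  T <= 4 * lam * M ^+ 2 / p.
Proof.
move=> lam_gt0 p_gt0 L_ge0 step T_le.
have c_gt0 : 0 < p / (4 * lam) by rewrite divr_gt0 ?mulr_gt0.
have L_le : L / 2 <= p / (4 * lam).
  have [->|L_neq0] := eqVneq L 0; first by rewrite mul0r ltW.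
  case: step => [L0|]; first by rewrite L0 eqxx in L_neq0.
  have L_gt0 : 0 < L by rewrite lt0r L_neq0.
  by rewrite !ler_pdivlMr ?mulr_gt0 //; lra.
have -> : 4 * lam * M ^+ 2 / p = (2 * M) ^+ 2 / (4 * (p / (4 * lam))).
  by field; rewrite !gt_eqF.
apply: le_trans (quadratic_le_max _ r c_gt0); apply: le_trans T_le _.
have p_split : p / (2 * lam) = p / (4 * lam) + p / (4 * lam) by field; rewrite gt_eqF.
have := sqr_ge0 r; rewrite p_split; nra.
Qed.

Lemma gap_le_bounded_domain M L lam p r D T : 0 < lam -> 0 < p -> 0 <= L ->
  0 <= r <= D ->
  T <= 2 * M * r + L / 2 * r ^+ 2 - p / (2 * lam) * r ^+ 2 ->
  T <= lam * (16 * M ^+ 2 + L ^+ 2 * D ^+ 2) / (4 * p).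
Proof.
move=> lam_gt0 p_gt0 L_ge0 /andP[r_ge0 r_le] T_le.
have c_gt0 : 0 < p / (2 * lam) by rewrite divr_gt0 ?mulr_gt0.
have quad := quadratic_le_max (2 * M + L * D / 2) r c_gt0.
have LrD : L / 2 * r ^+ 2 <= L * D / 2 * r.
  have : 0 <= L * r * (D - r) by rewrite !mulr_ge0 // subr_ge0.
  by rewrite expr2; lra.
have sq_le : (4 * M + L * D) ^+ 2 <= 2 * (16 * M ^+ 2 + L ^+ 2 * D ^+ 2).
  by have := sqr_ge0 (4 * M - L * D); nra.
apply: le_trans T_le (le_trans _ (le_trans quad _)); first lra.
have -> : (2 * M + L * D / 2) ^+ 2 / (4 * (p / (2 * lam)))
        = lam / (8 * p) * (4 * M + L * D) ^+ 2 by field; rewrite !gt_eqF.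
have -> : lam * (16 * M ^+ 2 + L ^+ 2 * D ^+ 2) / (4 * p)
        = lam / (8 * p) * (2 * (16 * M ^+ 2 + L ^+ 2 * D ^+ 2)) by field; rewrite gt_eqF.
by rewrite ler_pM2l ?divr_gt0 ?mulr_gt0.
Qed.

End QuadraticBounds.

Local Open Scope classical_set_scope.

Theorem lemma4p3 (R : realType) (n : nat)
    (f h : 'rV[R]_n -> \bar R) (fp : 'rV[R]_n -> 'rV[R]_n) (Mf Lf phistar : R)
    (x0 : 'rV[R]_n) (chi lam0 eps : R) (Nbar : nat)
    (J : nat) (lam : nat -> R) (N : nat -> nat) (xc : nat -> 'rV[R]_n)
    (fm : nat -> 'rV[R]_n -> \bar R) (x : nat -> 'rV[R]_n)
    (phib t : nat -> \bar R) (i : nat) :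
  (* standing assumptions *)
  cvx f -> cvx h ->
  edom h `<=` edom f ->
  (exists xs, (f xs + h xs = phistar%:E)%E) ->
  (forall u, (phistar%:E <= f u + h u)%E) ->
  0 <= Mf -> 0 <= Lf ->
  (forall u, edom h u -> is_subgrad f u (fp u)) ->
  (forall u v, edom h u -> edom h v ->
     enorm (fp u - fp v) <= 2 * Mf + Lf * enorm (u - v)) ->
  (* inputs of U-PB *)
  edom h x0 -> 0 <= chi < 1 -> 0 < lam0 -> 0 < eps -> (1 <= Nbar)%N ->
  (* a run of U-PB through iteration J, and i is the first iteration of a cycle *)
  UPB_run f h fp phistar x0 chi lam0 eps Nbar J lam N xc fm x phib t ->
  (1 <= i <= J)%N -> N i = 0%N ->
  (* (a) *)
  ((Lf = 0 \/ lam i <= (1 - chi) / (2 * Lf)) ->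
     (t i <= (4 * lam i * Mf ^+ 2 / (1 - chi))%:E)%E) /\
  (* (b) *)
  (forall D : R, (forall u v, edom h u -> edom h v -> enorm (u - v) <= D) ->
     (t i <= (lam i * (16 * Mf ^+ 2 + Lf ^+ 2 * D ^+ 2) / (4 * (1 - chi)))%:E)%E).
Proof.
move=> _ h_cvx _ attained _ _ Lf_ge0 f_subgrad growth x0_dom /andP[_ chi_lt1] lam0_gt0
  _ _ run iJ Ni.
have [lam_gt0 _ _] := run_invariant f_subgrad attained x0_dom lam0_gt0 run iJ.
have [xc_dom x_dom] := run_cycle_start_edom f_subgrad attained x0_dom lam0_gt0 run iJ Ni.
have [T -> T_le] :=
  run_cycle_start_gap h_cvx f_subgrad attained x0_dom lam0_gt0 run growth iJ Ni.
have p_gt0 : 0 < 1 - chi by rewrite subr_gt0.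
split => [step | D diam]; rewrite lee_fin.
  exact: gap_le_small_step lam_gt0 p_gt0 Lf_ge0 step T_le.
apply: gap_le_bounded_domain lam_gt0 p_gt0 Lf_ge0 _ T_le.
by rewrite enorm_ge0 diam.
Qed.
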